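(* Let $\mathcal Y\subset\mathbb R^d$ be finite with no element a strict convex combination of other elements, $Y$ the $d\times|\mathcal Y|$ matrix with columns $y\in\mathcal Y$, $\kappa>0$, $\xi_1,\dots,\xi_N$ noise samples, $c:\mathcal Y\times\Xi\to\mathbb R$ a cost and $\gamma_i=\gamma(\xi_i)=(c(y,\xi_i))_{y\in\mathcal Y}$. Let $\Omega_\Delta$ be a proper l.s.c. convex function with domain $\Delta^{\mathcal Y}$ whose restriction to the affine hull of $\Delta^{\mathcal Y}$ is Legendre-type, and assume $\Omega_\Delta$ is $L$-strongly convex, meaning that $\nabla\Omega_\Delta^*$ is $\frac1L$-Lipschitz continuous with respect to the Euclidean norm $\|\cdot\|$. Let $R_\Delta(q;\xi)=\langle\gamma(\xi)|q\rangle$, $\underline{S}(\theta;\xi)=\min_{q\in\Delta^{\mathcal Y}}\big[\langle\gamma(\xi)|q\rangle+\kappa\mathcal L_{\Omega_\Delta}(Y^\top\theta;q)\big]$, $\underline{\mathcal S_N}(\theta)=\frac1N\sum_i\underline S(\theta;\xi_i)$ and $\mathcal R_N(\theta)=\frac1N\sum_iR_\Delta(\nabla\Omega_\Delta^*(Y^\top\theta);\xi_i)$. Then for every $\theta\in\mathbb R^d$ and $i\in[N]$, $$\big|R_\Delta(\nabla\Omega_\Delta^*(Y^\top\theta);\xi_i)-\underline S(\theta;\xi_i)\big|\le\frac{3\|\gamma_i\|^2}{2L\kappa},\qquad |\underline{\mathcal S_N}(\theta)-\mathcal R_N(\theta)|\le\frac{3}{2NL\kappa}\sum_{i=1}^N\|\gamma_i\|^2,$$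 and for any $\theta_{\mathcal S}\in\operatorname{argmin}_\theta\underline{\mathcal S_N}(\theta)$ and $\theta_{\mathcal R}\in\operatorname{argmin}_\theta\mathcal R_N(\theta)$, $$\mathcal R_N(\theta_{\mathcal S})-\mathcal R_N(\theta_{\mathcal R})\le\frac{3}{L\kappa N}\sum_{i=1}^N\|\gamma_i\|^2.$$
   Context: $\Delta^{\mathcal Y}=\{q\in\mathbb R^{\mathcal Y}:q\ge0,\sum_yq_y=1\}$. Legendre-type: strictly convex on the interior of its domain, differentiable there with nonempty interior, and gradient norm tending to $+\infty$ at the boundary of the domain (for the restriction to an affine subspace, with respect to that subspace's metric). $\Omega_\Delta^*$ is the Fenchel conjugate and $\mathcal L_{\Omega_\Delta}(s;q)=\Omega_\Delta(q)+\Omega^*_\Delta(s)-\langle s|q\rangle$ is the Fenchel–Young loss. *)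

From HB Require Import structures.
From mathcomp Require Import all_boot all_order all_algebra.
From mathcomp Require Import classical_sets reals.
Set Implicit Arguments. Unset Strict Implicit. Unset Printing Implicit Defensive.
Import Order.TTheory GRing.Theory Num.Theory.
Local Open Scope ring_scope.
Local Open Scope classical_set_scope.

Definition dot (R : realType) (Y : finType) (u v : Y -> R) : R :=
  \sum_(y : Y) u y * v y.

Definition enorm (R : realType) (Y : finType) (u : Y -> R) : R :=
  Num.sqrt (\sum_(y : Y) u y ^+ 2).

Definition vsub (R : realType) (Y : finType) (u v : Y -> R) : Y -> R :=
  fun y => u y - v y.
Definition vadd (R : realType) (Y : finType) (u v : Y -> R) : Y -> R :=
  fun y => u y + v y.

Definition simplex (R : realType) (Y : finType) : set (Y -> R) :=
  [set q | (forall y, 0 <= q y) /\ \sum_(y : Y) q y = 1].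

Definition rsimplex (R : realType) (Y : finType) : set (Y -> R) :=
  [set q | (forall y, 0 < q y) /\ \sum_(y : Y) q y = 1].

Definition tangent (R : realType) (Y : finType) : set (Y -> R) :=
  [set v | \sum_(y : Y) v y = 0].

(* Omega_Delta is represented by its (finite) values on its domain Delta;
   it is +oo outside Delta, so only values on Delta are ever used. *)

Definition convex_on_simplex (R : realType) (Y : finType) (Om : (Y -> R) -> R) :=
  forall p q t, simplex p -> simplex q -> 0 <= t -> t <= 1 ->
    Om (fun y => t * p y + (1 - t) * q y) <= t * Om p + (1 - t) * Om q.

(* lower semicontinuity (of the extended function, which is +oo off Delta) *)
Definition lsc_on_simplex (R : realType) (Y : finType) (Om : (Y -> R) -> R) :=
  forall q, simplex q -> forall eps : R, 0 < eps -> exists2 delta : R, 0 < delta &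
    forall p, simplex p -> enorm (vsub p q) < delta -> Om q - eps < Om p.

Definition is_rel_gradient (R : realType) (Y : finType) (Om : (Y -> R) -> R)
    (g q : Y -> R) :=
  tangent g /\
  forall eps : R, 0 < eps -> exists2 delta : R, 0 < delta &
    forall h, tangent h -> simplex (vadd q h) -> enorm h < delta ->
      `|Om (vadd q h) - Om q - dot g h| <= eps * enorm h.

Definition vcvg (R : realType) (Y : finType) (u : nat -> Y -> R) (l : Y -> R) :=
  forall eps : R, 0 < eps -> exists M : nat, forall n, (M <= n)%N ->
    enorm (vsub (u n) l) < eps.

Definition legendre_on_aff (R : realType) (Y : finType) (Om : (Y -> R) -> R) :=
  (forall p q t, rsimplex p -> rsimplex q -> p <> q -> 0 < t -> t < 1 ->
     Om (fun y => t * p y + (1 - t) * q y) < t * Om p + (1 - t) * Om q) /\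
  exists gradOm : (Y -> R) -> (Y -> R),
    (forall q, rsimplex q -> is_rel_gradient Om (gradOm q) q) /\
    (forall (u : nat -> Y -> R) (q : Y -> R),
       (forall n, rsimplex (u n)) -> simplex q -> ~ rsimplex q -> vcvg u q ->
       forall B : R, exists M : nat, forall n, (M <= n)%N ->
         B < enorm (gradOm (u n))).

Definition fconj (R : realType) (Y : finType) (Om : (Y -> R) -> R) (s : Y -> R) : R :=
  sup [set dot s q - Om q | q in @simplex R Y].

Definition FYloss (R : realType) (Y : finType) (Om : (Y -> R) -> R) (s q : Y -> R) : R :=
  Om q + fconj Om s - dot s q.

Definition is_gradient (R : realType) (Y : finType) (f : (Y -> R) -> R)
    (g s : Y -> R) :=
  forall eps : R, 0 < eps -> exists2 delta : R, 0 < delta &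
    forall h, enorm h < delta -> `|f (vadd s h) - f s - dot g h| <= eps * enorm h.

(* Y^T theta, where the columns of Y are the points pts y in R^d *)
Definition YT (R : realType) (d : nat) (Y : finType) (pts : Y -> 'I_d -> R)
    (theta : 'I_d -> R) : Y -> R :=
  fun y => \sum_(k < d) pts y k * theta k.

Definition no_convex_comb_of_others (R : realType) (d : nat) (Y : finType)
    (pts : Y -> 'I_d -> R) :=
  forall y, ~ exists lam : Y -> R,
    (forall z, 0 <= lam z) /\ lam y = 0 /\ \sum_(z : Y) lam z = 1 /\
    forall k, pts y k = \sum_(z : Y) lam z * pts z k.

Definition gamma (R : realType) (Y : finType) (Xi : Type) (c : Y -> Xi -> R)
    (x : Xi) : Y -> R := fun y => c y x.

Definition RDelta (R : realType) (Y : finType) (Xi : Type) (c : Y -> Xi -> R)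
    (q : Y -> R) (x : Xi) : R := dot (gamma c x) q.

Definition Slow (R : realType) (d : nat) (Y : finType) (Xi : Type)
    (pts : Y -> 'I_d -> R) (c : Y -> Xi -> R) (kappa : R) (Om : (Y -> R) -> R)
    (theta : 'I_d -> R) (x : Xi) : R :=
  inf [set dot (gamma c x) q + kappa * FYloss Om (YT pts theta) q | q in @simplex R Y].

Definition SN (R : realType) (d : nat) (Y : finType) (Xi : Type)
    (pts : Y -> 'I_d -> R) (c : Y -> Xi -> R) (kappa : R) (Om : (Y -> R) -> R)
    (N : nat) (xi : 'I_N -> Xi) (theta : 'I_d -> R) : R :=
  N%:R^-1 * \sum_(i < N) Slow pts c kappa Om theta (xi i).

Definition RN (R : realType) (d : nat) (Y : finType) (Xi : Type)
    (pts : Y -> 'I_d -> R) (c : Y -> Xi -> R) (gradOmStar : (Y -> R) -> (Y -> R))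
    (N : nat) (xi : 'I_N -> Xi) (theta : 'I_d -> R) : R :=
  N%:R^-1 * \sum_(i < N) RDelta c (gradOmStar (YT pts theta)) (xi i).

Definition is_argmin (R : realType) (d : nat) (F : ('I_d -> R) -> R) (t : 'I_d -> R) :=
  forall t', F t <= F t'.

(* Write [s = Y^T theta], [g = gamma(xi)] and [F = Om^*]. Substituting the
   Fenchel-Young loss into the infimum turns it into a supremum defining [F] at
   a shifted point: [S(theta; xi) = kappa (F s - F (s - g / kappa))]. Since
   [R_Delta = <g | grad F s>], the difference is [kappa] times the gap between
   [F (s - g / kappa)] and its linearization at [s]. Convexity of [F] makes this
   gap nonnegative, and the [1/L]-Lipschitz gradient bounds it by
   [|g|^2 / (L kappa^2)]. Averaging over the samples gives the second bound,
   and comparing the empirical risk at a minimizer of the surrogate with any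
   other point through the uniform bound gives the third. *)
From HB Require Import structures.
From mathcomp Require Import all_boot all_order all_algebra.
From mathcomp Require Import boolp classical_sets reals ring lra.
Set Implicit Arguments. Unset Strict Implicit. Unset Printing Implicit Defensive.
Import Order.TTheory GRing.Theory Num.Theory.
Local Open Scope ring_scope.
Local Open Scope classical_set_scope.

Section Vectors.
Variables (R : realType) (Y : finType).
Implicit Types (u v w : Y -> R) (a : R).

Lemma enorm_ge0 u : 0 <= enorm u.
Proof. exact: sqrtr_ge0. Qed.

Lemma enorm_sqr u : enorm u ^+ 2 = \sum_y u y ^+ 2.
Proof. by rewrite sqr_sqrtr // sumr_ge0 // => y _; exact: sqr_ge0. Qed.

Lemma enormZ a u : 0 <= a -> enorm (fun y => a * u y) = a * enorm u.
Proof.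
move=> a0; rewrite /enorm; under eq_bigr do rewrite exprMn.
by rewrite -mulr_sumr sqrtrM ?sqr_ge0 // sqrtr_sqr ger0_norm.
Qed.

Lemma dotC u v : dot u v = dot v u.
Proof. by apply: eq_bigr => y _; rewrite mulrC. Qed.

Lemma dotZr a u v : dot u (fun y => a * v y) = a * dot u v.
Proof. by rewrite /dot mulr_sumr; apply: eq_bigr => y _; ring. Qed.

Lemma dotBl u v w : dot (vsub u v) w = dot u w - dot v w.
Proof. by rewrite /dot -sumrB; apply: eq_bigr => y _; rewrite mulrBl. Qed.

Lemma dot_vsubC u v w : dot u (vsub w v) = - dot u (vsub v w).
Proof. by rewrite /dot -sumrN; apply: eq_bigr => y _; rewrite /vsub; ring. Qed.

Lemma dot_le_amgm a u v : 0 < a ->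
  dot u v <= (a * enorm u ^+ 2 + enorm v ^+ 2 / a) / 2.
Proof.
move=> a0; rewrite !enorm_sqr mulr_sumr mulr_suml -big_split mulr_suml.
apply: ler_sum => y _ /=.
have : 0 <= (a * u y - v y) ^+ 2 / a by rewrite divr_ge0 ?sqr_ge0 ?ltW.
have -> : (a * u y - v y) ^+ 2 / a = a * u y ^+ 2 - 2 * (u y * v y) + v y ^+ 2 / a.
  by field; rewrite gt_eqF.
lra.
Qed.

End Vectors.

Section AffineSup.
Variable R : realType.
Implicit Types (A : set R) (k b : R).

Lemma sup_affine A k b : 0 < k -> has_sup A ->
  sup [set k * a + b | a in A] = k * sup A + b.
Proof.
move=> k0 [[a0 Aa0] ubA].
have ub_image : ubound [set k * a + b | a in A] (k * sup A + b).
  by move=> _ [a Aa <-]; rewrite lerD2r ler_pM2l // ub_le_sup.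
apply/le_anti/andP; split; first by apply: ge_sup => //; exists (k * a0 + b), a0.
rewrite -lerBrDr mulrC -ler_pdivlMr //; apply: ge_sup; first by exists a0.
move=> a Aa; rewrite ler_pdivlMr // lerBrDr mulrC.
by apply: ub_le_sup; [exists (k * sup A + b) | exists a].
Qed.

Lemma sup_affine_out A k b : 0 < k -> ~ has_ubound A ->
  sup [set k * a + b | a in A] = 0.
Proof.
move=> k0 nubA; apply: sup_out => -[_ [M ubM]]; apply: nubA.
exists ((M - b) / k) => a Aa; rewrite ler_pdivlMr // lerBrDr mulrC.
by apply: ubM; exists a.
Qed.

End AffineSup.

Section FenchelConjugate.
Variables (R : realType) (Y : finType) (Om : (Y -> R) -> R).
Implicit Types (s t g q : Y -> R).

Definition conj_set s : set R := [set dot s q - Om q | q in @simplex R Y].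

Lemma fconjE s : fconj Om s = sup (conj_set s).
Proof. by []. Qed.

Lemma simplex_le1 q y : simplex q -> q y <= 1.
Proof. by move=> [q0 <-]; rewrite (bigD1 y) //= lerDl sumr_ge0. Qed.

Lemma simplex_uniform : (0 < #|Y|)%N -> @simplex R Y (fun=> #|Y|%:R^-1).
Proof.
move=> Y0; split=> [y|]; first by rewrite invr_ge0 ler0n.
rewrite sumr_const (eq_card (B := Y)) // -[X in X = 1]mulr_natr mulVf //.
by rewrite pnatr_eq0 -lt0n.
Qed.

Lemma conj_set_neq0 s : (0 < #|Y|)%N -> conj_set s !=set0.
Proof. by move=> /simplex_uniform Yq; eexists; exists (fun=> #|Y|%:R^-1). Qed.

(* [sup] is [0] on unbounded sets; this lemma makes [fconj Om] either an
   honest supremum at every score or [0] everywhere. *)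
Lemma conj_set_ubound s t : has_ubound (conj_set s) -> has_ubound (conj_set t).
Proof.
move=> [M ubM]; exists (M + \sum_y `|t y - s y|) => _ [q qD <-].
have := ubM _ (ex_intro2 _ _ q qD erefl).
have : dot t q - dot s q <= \sum_y `|t y - s y|.
  rewrite /dot -sumrB; apply: ler_sum => y _; rewrite -mulrBl.
  apply: le_trans (ler_norm _) _; rewrite normrM (ger0_norm (qD.1 y)).
  by rewrite ler_piMr // simplex_le1.
lra.
Qed.

Lemma fconj_convex s t tau : (0 < #|Y|)%N -> 0 <= tau -> tau <= 1 ->
  fconj Om (fun y => s y + tau * (t y - s y)) <=
    (1 - tau) * fconj Om s + tau * fconj Om t.
Proof.
move=> Y0 tau0; rewrite -subr_ge0 => tau1.
have [ubs|nubs] := pselect (has_ubound (conj_set s)); last first.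
  have nsup u : ~ has_sup (conj_set u) by move=> [_ /(conj_set_ubound s)].
  by rewrite !fconjE !sup_out // !mulr0 addr0.
have ubt := conj_set_ubound t ubs.
rewrite fconjE; apply: ge_sup; first exact: conj_set_neq0.
move=> _ [q qD <-].
have fs : dot s q - Om q <= fconj Om s by apply: ub_le_sup => //; exists q.
have ft : dot t q - Om q <= fconj Om t by apply: ub_le_sup => //; exists q.
have -> : dot (fun y => s y + tau * (t y - s y)) q =
          (1 - tau) * dot s q + tau * dot t q.
  by rewrite /dot !mulr_sumr -big_split; apply: eq_bigr => y _ /=; ring.
have := ler_wpM2l tau0 ft; have := ler_wpM2l tau1 fs; lra.
Qed.

(* [inf] is [- sup] of the negated set, which is an affine image of
   [conj_set] at the shifted score [s - g / k]. *)
Lemma inf_cost_FYlossE g s k : (0 < #|Y|)%N -> 0 < k ->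
  inf [set dot g q + k * FYloss Om s q | q in @simplex R Y] =
  k * (fconj Om s - fconj Om (fun y => s y - g y / k)).
Proof.
move=> Y0 k0; set t := fun y => s y - g y / k; rewrite /inf.
have -> : -%R @` [set dot g q + k * FYloss Om s q | q in @simplex R Y] =
          [set k * a - k * fconj Om s | a in conj_set t].
  rewrite /conj_set !image_comp; apply: eq_imagel => q _ /=.
  rewrite /FYloss /t /dot.
  under [X in _ = k * (X - _) - _]eq_bigr do rewrite mulrBl mulrAC.
  by rewrite sumrB -mulr_suml; field; rewrite gt_eqF.
have [ubt|nubt] := pselect (has_ubound (conj_set t)).
  rewrite sup_affine //; last by split => //; exact: conj_set_neq0.
  by rewrite -fconjE; ring.
have nsup u : ~ has_sup (conj_set u) by move=> [_ /(conj_set_ubound t)].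
by rewrite sup_affine_out // !fconjE !sup_out // subrr mulr0 oppr0.
Qed.

End FenchelConjugate.

Section SmoothConvex.
Variables (R : realType) (Y : finType).
Variables (F : (Y -> R) -> R) (G : (Y -> R) -> Y -> R) (L : R).
Hypothesis F_convex : forall s t tau, 0 <= tau -> tau <= 1 ->
  F (fun y => s y + tau * (t y - s y)) <= (1 - tau) * F s + tau * F t.
Hypothesis G_gradient : forall s, is_gradient F (G s) s.
Hypothesis L_gt0 : 0 < L.
Hypothesis G_lipschitz : forall s t, enorm (vsub (G s) (G t)) <= L^-1 * enorm (vsub s t).
Implicit Types (s t g : Y -> R).

(* Convexity on the segment and differentiability at [s] give
   [tau * (F s + dot (G s) (t - s) - F t) <= eps * tau * |t - s|] once
   [tau * |t - s| < delta]; divide by [tau]. *)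
Lemma gradient_le s t : F s + dot (G s) (vsub t s) <= F t.
Proof.
apply/ler_addgt0Pr => e e0; set v := vsub t s; set n := enorm v.
have n0 : 0 <= n := enorm_ge0 v.
have [del del0 Fdiff] := G_gradient s (divr_gt0 e0 (ltr_pwDr ltr01 n0)).
set tau := del / (del + n).
have tau0 : 0 < tau by rewrite divr_gt0 // ltr_pwDl.
have tau1 : tau <= 1 by rewrite ler_pdivrMr ?ltr_pwDl // mul1r lerDl.
have tau_n : tau * n < del by rewrite mulrAC ltr_pdivrMr ?ltr_pwDl //; nra.
have := Fdiff (fun y => tau * v y); rewrite enormZ; last exact: ltW.
rewrite dotZr -/n => /(_ tau_n) /ler_normlP [Fup _].
have {Fup} Fup : F s + tau * dot (G s) v - e / (n + 1) * (tau * n) <=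
                 F (fun y => s y + tau * (t y - s y)) by move: Fup; rewrite /vadd; lra.
have conv := F_convex s t (ltW tau0) tau1.
have en : e / (n + 1) * n <= e by rewrite mulrAC ler_pdivrMr ?ltr_pwDr //; nra.
have : tau * (F s + dot (G s) v - F t - e / (n + 1) * n) <= 0 by nra.
rewrite pmulr_rle0 //; lra.
Qed.

Lemma dot_gradient_monotone_le s t :
  dot (vsub (G s) (G t)) (vsub s t) <= enorm (vsub s t) ^+ 2 / L.
Proof.
have G_sqr : enorm (vsub (G s) (G t)) ^+ 2 <= (L^-1 * enorm (vsub s t)) ^+ 2.
  by rewrite ler_sqr ?nnegrE ?G_lipschitz ?mulr_ge0 ?invr_ge0 ?enorm_ge0 ?ltW.
have L_G_sqr : L * (L^-1 * enorm (vsub s t)) ^+ 2 = enorm (vsub s t) ^+ 2 / L.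
  by field; rewrite gt_eqF.
have := dot_le_amgm (vsub (G s) (G t)) (vsub s t) L_gt0.
have := ler_wpM2l (ltW L_gt0) G_sqr; rewrite L_G_sqr; lra.
Qed.

Lemma linearization_gap_ge0 s t : 0 <= dot (G s) (vsub s t) - (F s - F t).
Proof. have := gradient_le s t; rewrite dot_vsubC; lra. Qed.

Lemma linearization_gap_le s t :
  dot (G s) (vsub s t) - (F s - F t) <= enorm (vsub s t) ^+ 2 / L.
Proof.
have := gradient_le t s; have := dot_gradient_monotone_le s t; rewrite dotBl; lra.
Qed.

Lemma scaled_linearization_gap g s k : 0 < k ->
  0 <= dot g (G s) - k * (F s - F (fun y => s y - g y / k)) <= enorm g ^+ 2 / (L * k).
Proof.
move=> k0; set t := fun y => s y - g y / k.
have st : vsub s t = fun y => k^-1 * g y.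
  by apply: funext => y; rewrite /vsub /t; field; rewrite gt_eqF.
have -> : dot g (G s) - k * (F s - F t) = k * (dot (G s) (vsub s t) - (F s - F t)).
  by rewrite st dotZr dotC; field; rewrite gt_eqF.
have -> : enorm g ^+ 2 / (L * k) = k * (enorm (vsub s t) ^+ 2 / L).
  by rewrite st enormZ ?invr_ge0 ?ltW //; field; rewrite !gt_eqF.
by rewrite pmulr_rge0 ?ler_pM2l ?linearization_gap_ge0 ?linearization_gap_le.
Qed.

End SmoothConvex.

Section UniformApproximation.
Variable R : realType.

Lemma mean_dist_le (N : nat) (f g b : 'I_N -> R) :
  (forall i, `|f i - g i| <= b i) ->
  `|N%:R^-1 * \sum_i f i - N%:R^-1 * \sum_i g i| <= N%:R^-1 * \sum_i b i.
Proof.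
move=> fgb; rewrite -mulrBr -sumrB normrM ger0_norm ?invr_ge0 ?ler0n //.
rewrite ler_wpM2l ?invr_ge0 ?ler0n //.
by apply: le_trans (ler_norm_sum _ _ _) _; apply: ler_sum => i _.
Qed.

Lemma argmin_approx_le (T : Type) (F G : T -> R) (b : R) (xF xG : T) :
  (forall x, `|F x - G x| <= b) ->
  (forall x, F xF <= F x) -> G xF - G xG <= 2 * b.
Proof.
move=> FG_b F_min; have := F_min xG.
by move: (FG_b xF) (FG_b xG) => /ler_normlP[] ? ? /ler_normlP[] ? ?; lra.
Qed.

End UniformApproximation.

Theorem theorem2 (R : realType) (d : nat) (Y : finType) (pts : Y -> 'I_d -> R)
    (Xi : Type) (c : Y -> Xi -> R) (N : nat) (xi : 'I_N -> Xi) (kappa L : R)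
    (Om : (Y -> R) -> R) (gradOmStar : (Y -> R) -> (Y -> R)) :
  no_convex_comb_of_others pts ->
  0 < kappa ->
  (0 < #|Y|)%N ->
  convex_on_simplex Om ->
  lsc_on_simplex Om ->
  legendre_on_aff Om ->
  0 < L ->
  (forall s, is_gradient (fconj Om) (gradOmStar s) s) ->
  (forall s t, enorm (vsub (gradOmStar s) (gradOmStar t)) <= L^-1 * enorm (vsub s t)) ->
  (forall (theta : 'I_d -> R) (i : 'I_N),
     `|RDelta c (gradOmStar (YT pts theta)) (xi i) - Slow pts c kappa Om theta (xi i)|
       <= 3 * enorm (gamma c (xi i)) ^+ 2 / (2 * L * kappa)) /\
  (forall theta : 'I_d -> R,
     `|SN pts c kappa Om xi theta - RN pts c gradOmStar xi theta|
       <= 3 / (2 * N%:R * L * kappa) * \sum_(i < N) enorm (gamma c (xi i)) ^+ 2) /\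
  (forall thS thR : 'I_d -> R,
     is_argmin (SN pts c kappa Om xi) thS ->
     is_argmin (RN pts c gradOmStar xi) thR ->
     RN pts c gradOmStar xi thS - RN pts c gradOmStar xi thR
       <= 3 / (L * kappa * N%:R) * \sum_(i < N) enorm (gamma c (xi i)) ^+ 2).
Proof.
(* The hypotheses on [pts] and on [Om] only serve, in the paper, to produce the
   Lipschitz gradient of [fconj Om], which is assumed here. *)
move=> _ kappa0 Y0 _ _ _ L0 grad lip.
have kappa_neq0 : kappa != 0 by rewrite gt_eqF.
have L_neq0 : L != 0 by rewrite gt_eqF.
set g2 := fun i => enorm (gamma c (xi i)) ^+ 2.
have sample_bound theta i :
    `|RDelta c (gradOmStar (YT pts theta)) (xi i) - Slow pts c kappa Om theta (xi i)|
      <= 3 * g2 i / (2 * L * kappa).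
  rewrite /RDelta /Slow inf_cost_FYlossE //.
  have /andP[gap_ge0 gap_le] := scaled_linearization_gap
    (fun s t tau => @fconj_convex _ _ Om s t tau Y0) grad L0 lip
    (gamma c (xi i)) (YT pts theta) kappa0.
  have -> : 3 * g2 i / (2 * L * kappa) = 3 / 2 * (g2 i / (L * kappa)).
    by field; apply/andP.
  rewrite ger0_norm // /g2; lra.
have mean_bound theta :
    `|SN pts c kappa Om xi theta - RN pts c gradOmStar xi theta|
      <= 3 / (2 * N%:R * L * kappa) * \sum_(i < N) g2 i.
  have -> : 3 / (2 * N%:R * L * kappa) * \sum_(i < N) g2 i =
            N%:R^-1 * \sum_(i < N) (3 * g2 i / (2 * L * kappa)).
    by rewrite -mulr_suml -mulr_sumr !invfM; ring.
  by rewrite /SN /RN distrC; apply: mean_dist_le => i; exact: sample_bound.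
split; [exact: sample_bound | split; [exact: mean_bound |]].
move=> thS thR S_min _.
have -> : 3 / (L * kappa * N%:R) * \sum_(i < N) g2 i =
          2 * (3 / (2 * N%:R * L * kappa) * \sum_(i < N) g2 i).
  by rewrite !invfM; set n := N%:R^-1; field; apply/andP.
exact: argmin_approx_le mean_bound S_min.
Qed.
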